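(* Fix a protocol specification $(I,D,C)$ and a setting $(n,r,f)$ with $r\ge 2$, and suppose the setting is feasible, i.e. there exists a correct state machine. Let $\mathit{Sc}$ be a scenario that leads to a definite decision, with definite final-state vector $(d_1,\dots,d_n)\in D^n$. Let $M$ be any state machine whose execution on $\mathit{Sc}$ ends with process $i$ in final state $d_i$ for every $i$, and let $T$ be a set of transitions $(t,i,x)\mapsto y$ that are applied in this execution of $M$ on $\mathit{Sc}$ (meaning: in round $t$, process $i$ has input vector $x$ and $M(t,i,x)=y$), such that for each pair $(t,i)\in\{1,\dots,r\}\times\{1,\dots,n\}$, $T$ contains at most one transition with round $t$ and process ID $i$. Then there exists a correct state machine $M'$ with $M'(t,i,x)=y$ for every transition $(t,i,x)\mapsto y$ in $T$.
   Context: Model. There are $n$ processes with IDs $1,\dots,n$, running for $r$ synchronous rounds, with at most $f$ crash failures. There is a finite set $I$ of initial states, a finite set $D$ of decision states, a finite set $Q$ of non-final (intermediate) states, and a special symbol $L$ (''lost message'') not in any of these sets. A state machine is a function $M$ assigning to each round $t\in\{1,\dots,r\}$, process ID $i$, and input vector $x=(x_1,\dots,x_n)\in (I\cup Q\cup\{L\})^n$ a new state $M(t,i,x)$, which lies in $Q$ if $t<r$ and in $D$ if $t=r$. Scenarios. A scenario is a pair $\mathit{Sc}=(\mathit{Init},\mathit{Loss})$ with $\mathit{Init}\in I^n$ and $\mathit{Loss}\subseteq\{(j,i,t)\}$ (meaning the message from $j$ to $i$ in round $t$ is lost), consistent with at most $f$ crashes: there is a set $P$ of at most $f$ processes and a crash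 round $c_p$ for each $p\in P$ such that messages from processes not in $P$ are never lost, and for $p\in P$ messages from $p$ in rounds $t<c_p$ are never lost, all messages from $p$ in rounds $t>c_p$ are lost, and in round $c_p$ an arbitrary subset of $p$'s messages is lost. A process in $P$ is called crashed. Execution. Process $i$ starts in state $s_i^0=\mathit{Init}[i]$. In round $t=1,\dots,r$, every process broadcasts its current state; process $i$'s input vector is $x^t_i$ with $(x^t_i)_j=s_j^{t-1}$ if $(j,i,t)\notin\mathit{Loss}$ and $(x^t_i)_j=L$ otherwise; then $s_i^t=M(t,i,x_i^t)$. The final state of process $i$ is $s_i^r\in D$. Correctness. $C$ is a property of the scenario together with the final decision states; it depends only on $\mathit{Sc}$ and the final states (not on intermediate states). A state machine is correct if for every scenario consistent with the setting, its execution satisfies $C$. The setting is feasible if a correct state machine exists. A scenario $\mathit{Sc}$ leads to a definite decision if there is a vector $(d_1,\dots,d_n)\in D^n$ such that every correct state machine, executed on $\mathit{Sc}$, ends with process $i$ in state $d_i$ for all $i$. *)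

From mathcomp Require Import all_boot.
Set Implicit Arguments. Unset Strict Implicit. Unset Printing Implicit Defensive.

(* Processes 1..n are modelled by 'I_n (process i+1 <-> ordinal i).
   The state sets I (initial), Q (intermediate), D (decision) are finite
   types; the disjoint union I ∪ Q ∪ {L} is the inductive [sin I Q]. *)

Inductive sin (I Q : Type) : Type :=
  | SInit of I
  | SInt of Q
  | SLost.
Arguments SLost {I Q}.

Definition invec (n : nat) (I Q : Type) := {ffun 'I_n -> sin I Q}.

Definition machine (n : nat) (I D Q : Type) :=
  nat -> 'I_n -> invec n I Q -> (Q + D)%type.

Definition valid_machine (n r : nat) (I D Q : Type) (M : machine n I D Q) : Prop :=
  forall t i x, 1 <= t <= r ->
    (t < r -> exists q, M t i x = inl q) /\ (t = r -> exists d, M t i x = inr d).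

(* A scenario: initial states and the set of lost messages;
   loss j i t = true means the message from j to i in round t is lost. *)
Record scenario (n : nat) (I : Type) := Scenario {
  sc_init : {ffun 'I_n -> I};
  sc_loss : 'I_n -> 'I_n -> nat -> bool }.

(* Consistency with at most f crash failures (and rounds 1..r). *)
Definition consistent (n r f : nat) (I : Type) (Sc : scenario n I) : Prop :=
  exists (P : {set 'I_n}) (c : 'I_n -> nat),
    #|P| <= f /\
    (forall j i t, sc_loss Sc j i t -> [/\ 1 <= t <= r, j \in P & c j <= t]) /\
    (forall j i t, j \in P -> c j < t <= r -> sc_loss Sc j i t).

Definition in_vec (n : nat) (I Q : Type) (Sc : scenario n I) (t : nat)
    (s : 'I_n -> sin I Q) (i : 'I_n) : invec n I Q :=
  [ffun j => if sc_loss Sc j i t then SLost else s j].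

(* states after m rounds (meaningful for m < r; a decision state, which
   never occurs before round r in a valid machine, is mapped to SLost) *)
Fixpoint exec_st (n : nat) (I D Q : Type) (M : machine n I D Q)
    (Sc : scenario n I) (m : nat) : 'I_n -> sin I Q :=
  match m with
  | 0 => fun i => SInit Q (sc_init Sc i)
  | m'.+1 => fun i =>
      match M m'.+1 i (in_vec Sc m'.+1 (exec_st M Sc m') i) with
      | inl q => SInt I q
      | inr _ => SLost
      end
  end.

Definition exec_input (n : nat) (I D Q : Type) (M : machine n I D Q)
    (Sc : scenario n I) (t : nat) (i : 'I_n) : invec n I Q :=
  in_vec Sc t (exec_st M Sc t.-1) i.

Definition final_is (n r : nat) (I D Q : Type) (M : machine n I D Q)
    (Sc : scenario n I) (i : 'I_n) (d : D) : Prop :=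
  M r i (exec_input M Sc r i) = inr d.

Definition correct (n r f : nat) (I D Q : Type)
    (C : scenario n I -> {ffun 'I_n -> D} -> Prop) (M : machine n I D Q) : Prop :=
  valid_machine r M /\
  forall Sc : scenario n I, consistent r f Sc ->
    exists ds : {ffun 'I_n -> D}, (forall i, final_is r M Sc i (ds i)) /\ C Sc ds.

Definition feasible (n r f : nat) (I D Q : Type)
    (C : scenario n I -> {ffun 'I_n -> D} -> Prop) : Prop :=
  exists M : machine n I D Q, correct r f C M.

Definition definite_decision (n r f : nat) (I D Q : Type)
    (C : scenario n I -> {ffun 'I_n -> D} -> Prop) (Sc : scenario n I)
    (ds : {ffun 'I_n -> D}) : Prop :=
  forall M : machine n I D Q, correct r f C M -> forall i, final_is r M Sc i (ds i).

Record transition (n : nat) (I D Q : Type) := Transition {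
  tr_round : nat;
  tr_proc : 'I_n;
  tr_input : invec n I Q;
  tr_output : (Q + D)%type }.

Definition applied (n r : nat) (I D Q : Type) (M : machine n I D Q)
    (Sc : scenario n I) (tr : transition n I D Q) : Prop :=
  [/\ 1 <= tr_round tr <= r,
      tr_input tr = exec_input M Sc (tr_round tr) (tr_proc tr)
    & M (tr_round tr) (tr_proc tr) (tr_input tr) = tr_output tr].

From mathcomp Require Import all_boot fingroup perm.
Set Implicit Arguments. Unset Strict Implicit. Unset Printing Implicit Defensive.

(* Renaming the intermediate states of a state machine by a permutation of Q
   chosen separately for every round and process changes nothing observable:
   the renamed machine undoes the renaming of its inputs, so it runs through
   the renamed states of the original execution and reaches the same decisions
   on every scenario, hence it stays correct.  Starting from any correct M0,
   choose, round by round, a transposition that renames the state M0 reaches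
   on Sc into the one M reaches: the renamed machine then reproduces M's
   execution of Sc in every round before the last, and in the last round both
   machines make the definite decision of Sc. *)

Section Relabel.

Variables (n : nat) (I D : Type) (Q : finType).

Definition relabel_state (p : {perm Q}) (s : sin I Q) : sin I Q :=
  if s is SInt q then SInt I (p q) else s.

Definition relabel_invec (rho : 'I_n -> {perm Q}) (x : invec n I Q) : invec n I Q :=
  [ffun j => relabel_state (rho j) (x j)].

Definition relabel_out (p : {perm Q}) (o : Q + D) : Q + D :=
  if o is inl q then inl (p q) else o.

Definition relabel_machine (rho : nat -> 'I_n -> {perm Q}) (M : machine n I D Q) :
    machine n I D Q :=
  fun t i x =>
    relabel_out (rho t i) (M t i (relabel_invec (fun j => (rho t.-1 j)^-1%g) x)).

Lemma relabel_invecK (rho : 'I_n -> {perm Q}) :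
  cancel (relabel_invec rho) (relabel_invec (fun j => (rho j)^-1%g)).
Proof. by move=> x; apply/ffunP => j; rewrite !ffunE; case: (x j) => //= q; rewrite permK. Qed.

Lemma relabel_out_inr (p : {perm Q}) (o : Q + D) (d : D) :
  (relabel_out p o = inr d) <-> (o = inr d).
Proof. by case: o. Qed.

Lemma eq_in_vec (Sc : scenario n I) t (s s' : 'I_n -> sin I Q) i :
  s =1 s' -> in_vec Sc t s i = in_vec Sc t s' i.
Proof. by move=> eq_s; apply/ffunP => j; rewrite !ffunE eq_s. Qed.

Lemma in_vec_relabel (Sc : scenario n I) t (rho : 'I_n -> {perm Q}) s i :
  in_vec Sc t (fun j => relabel_state (rho j) (s j)) i
  = relabel_invec rho (in_vec Sc t s i).
Proof. by apply/ffunP => j; rewrite !ffunE; case: (sc_loss Sc j i t). Qed.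

Variables (rho : nat -> 'I_n -> {perm Q}) (M : machine n I D Q).

Lemma relabel_machine_invec t i x :
  relabel_machine rho M t i (relabel_invec (rho t.-1) x)
  = relabel_out (rho t i) (M t i x).
Proof. by rewrite /relabel_machine relabel_invecK. Qed.

Lemma exec_st_relabel (Sc : scenario n I) t i :
  exec_st (relabel_machine rho M) Sc t i = relabel_state (rho t i) (exec_st M Sc t i).
Proof.
elim: t i => [//|t IH] i /=.
by rewrite (eq_in_vec _ _ _ IH) in_vec_relabel relabel_machine_invec; case: (M t.+1 i _).
Qed.

Lemma exec_input_relabel (Sc : scenario n I) t i :
  exec_input (relabel_machine rho M) Sc t i
  = relabel_invec (rho t.-1) (exec_input M Sc t i).
Proof.
by rewrite /exec_input -in_vec_relabel; apply: eq_in_vec => j; rewrite exec_st_relabel.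
Qed.

Lemma final_is_relabel r (Sc : scenario n I) i d :
  final_is r (relabel_machine rho M) Sc i d <-> final_is r M Sc i d.
Proof. by rewrite /final_is exec_input_relabel relabel_machine_invec; apply: relabel_out_inr. Qed.

Lemma valid_relabel r : valid_machine r M -> valid_machine r (relabel_machine rho M).
Proof.
move=> vM t i x rng; rewrite /relabel_machine.
have [inQ inD] := vM t i (relabel_invec (fun j => (rho t.-1 j)^-1%g) x) rng.
split=> [/inQ [q ->] | /inD [d ->]]; last by exists d.
by exists (rho t i q).
Qed.

Lemma correct_relabel r f (C : scenario n I -> {ffun 'I_n -> D} -> Prop) :
  correct r f C M -> correct r f C (relabel_machine rho M).
Proof.
move=> [vM decM]; split; first exact: valid_relabel.
move=> Sc /decM [ds [finM Cds]]; exists ds; split=> // i.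
exact/final_is_relabel.
Qed.

End Relabel.

Section Align.

Variables (n r : nat) (I D : Type) (Q : finType) (M0 M : machine n I D Q) (Sc : scenario n I).

Definition swap_out (o o' : Q + D) : {perm Q} :=
  if (o, o') is (inl a, inl b) then tperm a b else 1%g.

Lemma relabel_swap_out (o o' : Q + D) :
  (exists a, o = inl a) -> (exists b, o' = inl b) -> relabel_out (swap_out o o') o = o'.
Proof. by move=> [a ->] [b ->] /=; rewrite tpermL. Qed.

Fixpoint align (t : nat) : 'I_n -> {perm Q} :=
  if t is t'.+1 then fun i =>
    let x := exec_input M Sc t i in
    swap_out (M0 t i (relabel_invec (fun j => (align t' j)^-1%g) x)) (M t i x)
  else fun _ => 1%g.

Hypotheses (vM0 : valid_machine r M0) (vM : valid_machine r M).

Lemma align_step t i : t.+1 < r ->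
  relabel_machine align M0 t.+1 i (exec_input M Sc t.+1 i) = M t.+1 i (exec_input M Sc t.+1 i).
Proof.
move=> ltr; have rng : 1 <= t.+1 <= r by rewrite (ltnW ltr).
by apply: relabel_swap_out; [exact: (vM0 _ _ rng).1 ltr | exact: (vM _ _ rng).1 ltr].
Qed.

Lemma exec_st_align t : t < r -> exec_st (relabel_machine align M0) Sc t =1 exec_st M Sc t.
Proof.
elim: t => [//|t IH] ltr i /=.
by rewrite (eq_in_vec _ _ _ (IH (ltnW ltr))) align_step.
Qed.

Lemma exec_input_align t i : 1 <= t <= r ->
  exec_input (relabel_machine align M0) Sc t i = exec_input M Sc t i.
Proof.
by case: t => [//|t] ler; apply: eq_in_vec; apply: exec_st_align.
Qed.

End Align.

Theorem theorem2 (n r f : nat) (I D Q : finType)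
    (C : scenario n I -> {ffun 'I_n -> D} -> Prop) :
  2 <= r ->
  feasible r f Q C ->
  forall (Sc : scenario n I) (ds : {ffun 'I_n -> D}),
    consistent r f Sc ->
    definite_decision r f Q C Sc ds ->
  forall M : machine n I D Q,
    valid_machine r M ->
    (forall i, final_is r M Sc i (ds i)) ->
  forall T : transition n I D Q -> Prop,
    (forall tr, T tr -> applied r M Sc tr) ->
    (forall tr1 tr2, T tr1 -> T tr2 ->
       tr_round tr1 = tr_round tr2 -> tr_proc tr1 = tr_proc tr2 -> tr1 = tr2) ->
  exists M' : machine n I D Q,
    correct r f C M' /\
    (forall tr, T tr -> M' (tr_round tr) (tr_proc tr) (tr_input tr) = tr_output tr).
Proof.
(* M' agrees with M on every transition of M's execution of Sc. *)
move=> _ [M0 corM0] Sc ds _ defSc M vM finM T appT _.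
set M' := relabel_machine (align M0 M Sc) M0.
have corM' : correct r f C M' by apply: correct_relabel.
exists M'; split=> // tr /appT [rng -> <-].
move: rng; case: (tr_round tr) => [//|t] rng.
have /= := rng; rewrite leq_eqVlt => /orP [/eqP rE | ltr].
  have decM' := defSc M' corM' (tr_proc tr); have decM := finM (tr_proc tr).
  rewrite /final_is -rE in decM decM'.
  by rewrite (exec_input_align Sc corM0.1 vM _ rng) in decM'; rewrite decM decM'.
by rewrite /M' (align_step Sc corM0.1 vM _ ltr).
Qed.
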